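(* Let $S$ be a caterpillar; then $S$ is upright. Moreover, let $P$ be a spine of $S$, and let $\mathcal B$ be a bias in $S$ such that $|D_S(X)|\ge 2$ for each $X\in\mathcal B$. Then there is a directing of $S$, forming a digraph $S'$, such that $D^+_{S'}(X)\ne\emptyset$ and $D^-_{S'}(X)\ne\emptyset$ for each $X\in\mathcal B$, and such that $P$ becomes a directed path of $S'$.
   Context: A path $P$ of a tree $S$ is a spine if every vertex of $S$ either belongs to $P$ or has a neighbour in $P$; a tree with a spine is a caterpillar. For a graph $G$ and $X\subseteq V(G)$, $D_G(X)$ is the set of edges with one end in $X$ and the other in $V(G)\setminus X$; for $A,B\subseteq V(G)$, $D_G(A,B)$ is the set of edges with one end in $A\setminus B$ and the other in $B\setminus A$. A bias in a graph $S$ is a set $\mathcal B$ of subsets of $V(S)$ such that: every $A\in\mathcal B$ satisfies $A\ne\emptyset, V(S)$; if $A,B\in\mathcal B$ and $D_S(A,B)=\emptyset$ then both $A\cap B$ and $A\cup B$ lie in $\mathcal B\cup\{\emptyset,V(S)\}$; and if $A,B\in\mathcal B$ and $|D_S(A,B)|=1$ then at least one of $A\cap B, A\cup B$ lies in $\mathcal B\cup\{\emptyset,V(S)\}$. A directing of $S$ assigns to each edge one of its ends as head, giving a digraph $S'$; $D^+_{S'}(X)$ is the set of edges with tail in $X$ and head outside $X$, and $D^-_{S'}(X)=D^+_{S'}(V(S)\setminus X)$. A forest $S$ is upright if for every bias $\mathcal B$ in $S$ with $|D_S(X)|\ge 2$ for all $X\in\mathcal B$, there is a directing of $S$, forming a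 digraph $S'$, such that $D^+_{S'}(X)\ne\emptyset$ and $D^-_{S'}(X)\neq\emptyset$ for all $X\in\mathcal B$. *)

(* A graph S is a finite simple graph: vertex type T : finType,
   adjacency e : rel T, symmetric and irreflexive. *)
From mathcomp Require Import all_boot.
Set Implicit Arguments. Unset Strict Implicit. Unset Printing Implicit Defensive.

Section Graphs.
Variables (T : finType) (e : rel T).

Definition simple_graph : Prop := symmetric e /\ irreflexive e.

(* no cycle: every duplicate-free closed e-walk has at most 2 vertices
   (a 2-vertex "cycle" [x; y] is just one edge traversed back and forth) *)
Definition forest : Prop := forall c : seq T, ucycle e c -> size c <= 2.

Definition connected : Prop := forall x y : T, connect e x y.

Definition tree : Prop := forest /\ connected.

Definition is_path (p : seq T) : Prop :=
  p != [::] /\ uniq p /\ sorted e p.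

Definition spine (p : seq T) : Prop :=
  is_path p /\ forall v : T, v \in p \/ exists2 u, u \in p & e v u.

Definition caterpillar : Prop := tree /\ exists p, spine p.

(* |D_S(X)| : each edge counted once, as the ordered pair (inside, outside) *)
Definition dcut (X : {set T}) : nat :=
  #|[set xy : T * T | (xy.1 \in X) && (xy.2 \notin X) && e xy.1 xy.2]|.

Definition dcut2 (A B : {set T}) : nat :=
  #|[set xy : T * T | (xy.1 \in A :\: B) && (xy.2 \in B :\: A) && e xy.1 xy.2]|.

Definition inBo (Bs : {set {set T}}) (Y : {set T}) : bool :=
  (Y \in Bs) || (Y == set0) || (Y == setT).

Definition bias (Bs : {set {set T}}) : Prop :=
  [/\ forall A, A \in Bs -> A != set0 /\ A != setT,
      forall A B, A \in Bs -> B \in Bs -> dcut2 A B = 0 ->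
        inBo Bs (A :&: B) /\ inBo Bs (A :|: B)
    & forall A B, A \in Bs -> B \in Bs -> dcut2 A B = 1 ->
        inBo Bs (A :&: B) \/ inBo Bs (A :|: B)].

(* a directing: d x y means the edge xy is directed with tail x and head y *)
Definition directing (d : rel T) : Prop :=
  (forall x y, d x y -> e x y) /\ (forall x y, e x y -> d x y = ~~ d y x).

Definition out_nonempty (d : rel T) (X : {set T}) : Prop :=
  exists x y, [/\ x \in X, y \notin X & d x y].

Definition in_nonempty (d : rel T) (X : {set T}) : Prop :=
  out_nonempty d (~: X).

Definition upright : Prop :=
  forest /\
  forall Bs : {set {set T}}, bias Bs -> (forall X, X \in Bs -> 2 <= dcut X) ->
    exists d, directing d /\
      forall X, X \in Bs -> out_nonempty d X /\ in_nonempty d X.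

End Graphs.

From mathcomp Require Import all_boot zify.
From Stdlib Require Import Classical.
Set Implicit Arguments. Unset Strict Implicit. Unset Printing Implicit Defensive.

(* Direct the spine [p] as a path. If this path enters a biased set [X], it supplies an
   entering edge; otherwise [X] meets [p] in a prefix, and an edge entering [X] must be a leaf
   edge, joining a vertex off [p] to its unique neighbour on [p]. Leaf edges are oriented
   greedily, in the order of the spine positions of the leaves: a leaf is directed away from
   the spine exactly when some prefix set, all of whose cut leaves come no later, would
   otherwise have all its leaf edges leaving it. This choice never spoils a prefix set: such a
   set can be uncrossed, using the bias axioms, with the sets that forced the earlier leaves,
   until one reaches either a set with at most one cut edge or a set already spoiled at an
   earlier stage. Leaving edges are handled as entering edges of complements. *)

Lemma sorted_uniq_segment (U : eqType) (r : rel U) (s : seq U) u v :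
  uniq s -> sorted r s -> u \in s -> v \in s -> index u s < index v s ->
  exists q, [/\ path r u (rcons q v), uniq (u :: rcons q v), {subset q <= s}
          & size q = index v s - (index u s).+1].
Proof.
elim: s => [|a s IH] //= /andP[nas us] srt.
rewrite !inE.
have srt' : sorted r s by move: srt; case: s {IH nas us} => //= b s /andP[].
case: (eqVneq u a) => [->|nua] /=.
  move=> _ /orP[/eqP->|vs]; first by rewrite eqxx.
  case: (eqVneq a v) => [vea|nva]; first by rewrite vea vs in nas.
  move=> _.
  have iv : index v s < size s by rewrite index_mem.
  have E : rcons (take (index v s) s) v = take (index v s).+1 s.
    by rewrite (take_nth a) // nth_index.
  exists (take (index v s) s); split.
  - by rewrite E; apply: take_path.
  - rewrite /= E; apply/andP; split; last exact: take_uniq.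
    by apply: contra nas; apply: mem_take.
  - by move=> z /mem_take zs; rewrite inE zs orbT.
  - by rewrite size_takel ?subn1 //; apply: ltnW.
move=> us' /orP[/eqP va|vs]; first by rewrite va eqxx.
case: (eqVneq a v) => [va|nva]; first by rewrite va vs in nas.
rewrite ltnS => lt.
have [q [h1 h2 h3 h4]] := IH us srt' us' vs lt.
exists q; split=> // z /h3 zs; by rewrite inE zs orbT.
Qed.

Section Cuts.
Variables (T : finType) (e : rel T).
Hypothesis e_sym : symmetric e.

Definition cut2 (A B : {set T}) : {set T * T} :=
  [set xy | (xy.1 \in A :\: B) && (xy.2 \in B :\: A) && e xy.1 xy.2].

Lemma dcut2E A B : dcut2 e A B = #|cut2 A B|. Proof. by []. Qed.

Let flip_inj : injective (fun xy : T * T => (xy.2, xy.1)).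
Proof. by move=> [? ?] [? ?] [-> ->]. Qed.

Lemma dcut_setC Z : dcut e (~: Z) = dcut e Z.
Proof.
rewrite /dcut -[in RHS](card_imset _ flip_inj); apply: eq_card => -[u v].
rewrite !inE /=; apply/idP/imsetP => [/andP[/andP[uZ vZ] euv]|[[a b]]].
  by exists (v, u) => //; rewrite inE /= (negbNE vZ) uZ e_sym.
by rewrite inE /= => /andP[/andP[aZ bZ] eab] [-> ->]; rewrite bZ aZ e_sym.
Qed.

Lemma dcut2C A B : dcut2 e A B = dcut2 e B A.
Proof.
rewrite !dcut2E -[in RHS](card_imset _ flip_inj); apply: eq_card => -[u v].
rewrite !inE /=; apply/idP/imsetP => [/andP[/andP[uA vB] euv]|[[a b]]].
  by exists (v, u) => //; rewrite !inE /= e_sym vB euv -andbA uA.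
by rewrite !inE /= => /andP[/andP[aB bA] eab] [-> ->]; rewrite bA aB e_sym.
Qed.

Lemma dcut2_setC A B : dcut2 e (~: A) (~: B) = dcut2 e A B.
Proof.
rewrite [RHS]dcut2C /dcut2; apply: eq_card => -[u v].
by rewrite !inE !negbK /=; case: (u \in A); case: (u \in B); case: (v \in A); case: (v \in B).
Qed.

End Cuts.

Section Biased.
Variables (T : finType) (e : rel T) (Bs : {set {set T}}).
Hypotheses (e_sym : symmetric e) (Bs_bias : bias e Bs)
  (Bs_dcut : forall X, X \in Bs -> 2 <= dcut e X).

(* [Bs] is not closed under complement, but the uncrossing axioms survive complementing both sets *)
Definition biased (Z : {set T}) := (Z \in Bs) || (~: Z \in Bs).
Definition biased_or_trivial (Z : {set T}) := [|| biased Z, Z == set0 | Z == setT].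

Lemma biasedC Z : biased (~: Z) = biased Z.
Proof. by rewrite /biased setCK orbC. Qed.

Lemma biased_dcut Z : biased Z -> 2 <= dcut e Z.
Proof. by move=> /orP[/Bs_dcut //|/Bs_dcut]; rewrite dcut_setC. Qed.

Lemma inBo_biased Y : inBo Bs Y -> biased_or_trivial Y.
Proof. by rewrite /inBo /biased_or_trivial /biased => /orP[/orP[->|->]|->]; rewrite ?orbT. Qed.

Lemma inBoC_biased Y : inBo Bs (~: Y) -> biased_or_trivial Y.
Proof.
rewrite /inBo /biased_or_trivial /biased => /orP[/orP[->|]|]; rewrite ?orbT //.
- by rewrite -setCT => /eqP /setC_inj ->; rewrite eqxx !orbT.
- by rewrite -setC0 => /eqP /setC_inj ->; rewrite eqxx !orbT.
Qed.

Lemma biased_orientation A B : biased A -> biased B ->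
  (A \in Bs) && (B \in Bs) || (~: A \in Bs) && (~: B \in Bs) \/
  (A \in Bs) && (~: B \in Bs) || (~: A \in Bs) && (B \in Bs).
Proof.
rewrite /biased.
by case: (A \in Bs); case: (~: A \in Bs); case: (B \in Bs); case: (~: B \in Bs) => //=; auto.
Qed.

Lemma biased_uncross1 A B :
  (A \in Bs) && (B \in Bs) || (~: A \in Bs) && (~: B \in Bs) ->
  dcut2 e A B = 1 -> biased_or_trivial (A :&: B) \/ biased_or_trivial (A :|: B).
Proof.
case: Bs_bias => _ _ bias1 /orP[/andP[aB bB]|/andP[aB bB]] d.
  by case: (bias1 A B aB bB d) => /inBo_biased; [left|right].
rewrite -(dcut2_setC e_sym) in d.
by case: (bias1 _ _ aB bB d); rewrite -?setCU -?setCI => /inBoC_biased ?; [right|left].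
Qed.

Lemma biased_uncross0 A B :
  (A \in Bs) && (~: B \in Bs) || (~: A \in Bs) && (B \in Bs) ->
  dcut2 e A (~: B) = 0 -> biased_or_trivial (A :\: B).
Proof.
case: Bs_bias => _ bias0 _ /orP[/andP[aB bB]|/andP[aB bB]] d.
  by case: (bias0 A _ aB bB d); rewrite setDE => /inBo_biased.
rewrite -[dcut2 e A _](dcut2_setC e_sym) setCK in d.
case: (bias0 _ _ aB bB d) => _.
by rewrite -[B]setCK -setCI -setDE setCK => /inBoC_biased.
Qed.

End Biased.

Section Caterpillar.
Variables (T : finType) (e : rel T).
Hypotheses (e_sym : symmetric e) (e_irr : irreflexive e) (e_forest : forest e).
Variable p : seq T.
Hypothesis p_spine : spine e p.

Lemma spine_uniq : uniq p. Proof. by case: p_spine => [[_ []]]. Qed.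
Lemma spine_sorted : sorted e p. Proof. by case: p_spine => [[_ []]]. Qed.

Lemma forest_cycle_small x c : path e x (rcons c x) -> uniq (x :: c) -> size c < 2.
Proof. by move=> cyc U; apply: (e_forest (c := x :: c)); rewrite /ucycle /= cyc. Qed.

Definition attach (v : T) : T :=
  if v \in p then v else odflt v [pick u | (u \in p) && e v u].

Lemma attach_mem v : attach v \in p.
Proof.
rewrite /attach; case: ifP => // vp.
case: p_spine => _ /(_ v) [|[u up evu]]; first by rewrite vp.
by case: pickP => [w /andP[] //|/(_ u)]; rewrite up evu.
Qed.

Lemma attach_id v : v \in p -> attach v = v.
Proof. by rewrite /attach => ->. Qed.

Lemma attach_idem v : attach (attach v) = attach v.
Proof. exact: attach_id (attach_mem v). Qed.

Lemma edge_attach v : v \notin p -> e v (attach v).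
Proof.
rewrite /attach => /negbTE vnp; rewrite vnp.
case: p_spine => _ /(_ v) [vp|[u up evu]]; first by rewrite vp in vnp.
by case: pickP => [w /andP[] //|/(_ u)]; rewrite up evu.
Qed.

Lemma spine_segment u w : u \in p -> w \in p -> index u p < index w p ->
  exists q, [/\ path e u (rcons q w), uniq (u :: rcons q w)
              & {subset u :: rcons q w <= p}].
Proof.
move=> up wp lt.
have [q [P U S _]] := sorted_uniq_segment spine_uniq spine_sorted up wp lt.
exists q; split => // z; rewrite inE mem_rcons !inE.
by case/or3P => [/eqP->|/eqP->|/S].
Qed.

(* an edge between non-consecutive spine vertices would close a cycle *)
Lemma spine_edge_index u v : u \in p -> v \in p -> e u v ->
  (index v p == (index u p).+1) || (index u p == (index v p).+1).
Proof.
wlog lt : u v / index u p < index v p.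
  move=> W up vp euv.
  case: (ltngtP (index u p) (index v p)) => c.
  - exact: W.
  - by rewrite orbC; apply: W => //; rewrite e_sym.
  - by move: euv; rewrite (index_inj (head u p) up vp c) e_irr.
move=> up vp euv.
have [q [P U S Z]] := sorted_uniq_segment spine_uniq spine_sorted up vp lt.
case: q P U S Z => [|a q] P U S Z.
  by apply/orP; left; apply/eqP; move: Z lt => /=; lia.
have : size (rcons (a :: q) v) < 2.
  by apply: forest_cycle_small U; rewrite rcons_path last_rcons e_sym euv andbT.
by rewrite size_rcons.
Qed.

Lemma leaf_spine_nbr v u : v \notin p -> u \in p -> e v u -> u = attach v.
Proof.
move=> vnp up evu.
have ordered a b : a \in p -> b \in p -> e v a -> e v b -> ~ index a p < index b p.
  move=> ap bp eva evb /(spine_segment ap bp) [q [P U S]].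
  have : size (a :: rcons q b) < 2.
    apply: (forest_cycle_small (x := v)).
      by rewrite rcons_path /= eva P /= last_rcons e_sym evb.
    by rewrite /= -/(uniq (a :: rcons q b)) U andbT; apply: contra vnp => /S.
  by rewrite /= size_rcons.
have hp := attach_mem v; have evh := edge_attach vnp.
case: (ltngtP (index u p) (index (attach v) p)) => c.
- by case: (ordered _ _ up hp evu evh c).
- by case: (ordered _ _ hp up evh evu c).
- exact: (index_inj v up hp c).
Qed.

Lemma no_leaf_edge v w : v \notin p -> w \notin p -> ~~ e v w.
Proof.
wlog le : v w / index (attach v) p <= index (attach w) p.
  move=> W vnp wnp; case: (leqP (index (attach v) p) (index (attach w) p)) => c.
    exact: W.
  by rewrite e_sym; apply: W => //; apply: ltnW.
move=> vnp wnp; apply/negP => evw.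
have hv := attach_mem v; have hw := attach_mem w.
have ev := edge_attach vnp; have ew := edge_attach wnp.
have vw : v != w by apply: contraTneq evw => ->; rewrite e_irr.
case: (ltngtP (index (attach v) p) (index (attach w) p)) le => // c _.
  have [q [P U S]] := spine_segment hv hw c.
  have : size (v :: attach v :: rcons q (attach w)) < 2.
    apply: (forest_cycle_small (x := w)).
      by rewrite /= e_sym evw ev rcons_path /= P last_rcons e_sym ew.
    rewrite /= -/(uniq (attach v :: rcons q (attach w))) U andbT inE negb_or.
    rewrite eq_sym vw /=.
    by apply/andP; split; [apply: contra wnp => /S | apply: contra vnp => /S].
  by rewrite /= size_rcons.
have E : attach v = attach w := index_inj v hv hw c.
have : size [:: w; attach v] < 2.
  apply: (forest_cycle_small (x := v)); first by rewrite /= evw E ew e_sym -E ev.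
  rewrite /= !inE negb_or vw /= andbT.
  by apply/andP; split; [apply: contra vnp => /eqP -> | apply: contra wnp => /eqP ->].
by [].
Qed.

Definition sidx v := index (attach v) p.

Lemma sidx_attach v : sidx (attach v) = sidx v.
Proof. by rewrite /sidx attach_idem. Qed.

Lemma sidx_spine v : v \in p -> sidx v = index v p.
Proof. by move=> vp; rewrite /sidx attach_id. Qed.

Lemma sidx_lt v : sidx v < size p.
Proof. by rewrite /sidx index_mem attach_mem. Qed.

Lemma caterpillar_edge_cases u v : e u v ->
  [\/ [/\ u \in p, v \in p & (sidx v == (sidx u).+1) || (sidx u == (sidx v).+1)],
      u \notin p /\ v = attach u
    | v \notin p /\ u = attach v].
Proof.
move=> euv.
have [up|up] := boolP (u \in p); have [vp|vp] := boolP (v \in p).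
- by apply: Or31; rewrite !sidx_spine //; split => //; apply: spine_edge_index.
- by apply: Or33; split => //; apply: leaf_spine_nbr; rewrite // e_sym.
- by apply: Or32; split => //; apply: leaf_spine_nbr.
- by move: euv; rewrite (negbTE (no_leaf_edge up vp)).
Qed.

Definition spine_prefix (Z : {set T}) m := forall v, v \in p -> (v \in Z) = (sidx v < m).
Definition outer_leaves (Z : {set T}) :=
  [set l | (l \notin p) && (attach l \in Z) && (l \notin Z)].
Definition inner_leaves (Z : {set T}) :=
  [set l | (l \notin p) && (attach l \notin Z) && (l \in Z)].

Lemma outer_leavesE Z l : (l \in outer_leaves Z) = [&& l \notin p, attach l \in Z & l \notin Z].
Proof. by rewrite inE andbA. Qed.
Lemma inner_leavesE Z l : (l \in inner_leaves Z) = [&& l \notin p, attach l \notin Z & l \in Z].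
Proof. by rewrite inE andbA. Qed.

Lemma outer_leavesC Z : outer_leaves (~: Z) = inner_leaves Z.
Proof. by apply/setP => l; rewrite outer_leavesE inner_leavesE !inE negbK. Qed.
Lemma inner_leavesC Z : inner_leaves (~: Z) = outer_leaves Z.
Proof. by apply/setP => l; rewrite outer_leavesE inner_leavesE !inE negbK. Qed.

Lemma outer_inner_leaves Z l : l \in outer_leaves Z -> l \notin inner_leaves Z.
Proof. by rewrite outer_leavesE inner_leavesE => /and3P[_ -> _]; rewrite andbF. Qed.

Lemma outer_leavesI A B l : l \in outer_leaves (A :&: B) ->
  l \in outer_leaves A \/ [/\ l \in A, attach l \in A & l \in outer_leaves B].
Proof.
rewrite !outer_leavesE !inE negb_and => /and3P[-> /andP[hA hB] /orP[nA|nB]].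
  by left; rewrite hA.
by case: (boolP (l \in A)) => lA; [right; split; rewrite ?hB | left; rewrite hA].
Qed.

Lemma inner_leavesI A B l : l \in inner_leaves (A :&: B) ->
  (l \in inner_leaves A /\ l \in B) \/ [/\ attach l \in A, l \in A & l \in inner_leaves B].
Proof.
rewrite !inner_leavesE !inE negb_and => /and3P[-> /orP[nA|nB] /andP[lA lB]].
  by left; rewrite nA lA.
by case: (boolP (attach l \in A)) => hA; [right; rewrite lA nB lB | left; rewrite lA lB].
Qed.

Lemma outer_leavesU A B l : l \in outer_leaves (A :|: B) ->
  (l \in outer_leaves A /\ l \notin B) \/ (l \in outer_leaves B /\ l \notin A).
Proof.
rewrite !outer_leavesE !inE negb_or => /and3P[-> /orP[hA|hB] /andP[nA nB]].
  by left; rewrite hA nA nB.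
by right; rewrite hB nA nB.
Qed.

Lemma inner_leavesU A B l : l \in inner_leaves (A :|: B) ->
  (l \in inner_leaves A /\ attach l \notin B) \/ (l \in inner_leaves B /\ attach l \notin A).
Proof.
rewrite !inner_leavesE !inE negb_or => /and3P[-> /andP[nA nB] /orP[lA|lB]].
  by left; rewrite nA lA nB.
by right; rewrite nB lB nA.
Qed.

Lemma spine_prefix_attach Z m v : spine_prefix Z m -> (attach v \in Z) = (sidx v < m).
Proof. by move=> pZ; rewrite pZ ?attach_mem // sidx_attach. Qed.

Lemma spine_prefix_sub A B ma mb v : spine_prefix A ma -> spine_prefix B mb -> ma <= mb ->
  v \in p -> v \in A -> v \in B.
Proof. by move=> pA pB le vp; rewrite pA // pB // => lt; apply: leq_trans lt le. Qed.

Lemma spine_prefixI A B ma mb :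
  spine_prefix A ma -> spine_prefix B mb -> spine_prefix (A :&: B) (minn ma mb).
Proof. by move=> pA pB v vp; rewrite inE pA // pB // leq_min. Qed.

Lemma spine_prefixU A B ma mb :
  spine_prefix A ma -> spine_prefix B mb -> spine_prefix (A :|: B) (maxn ma mb).
Proof. by move=> pA pB v vp; rewrite inE pA // pB // leq_max. Qed.

Lemma spine_prefix0 (Z : {set T}) : {in p, forall v, v \notin Z} -> spine_prefix Z 0.
Proof. by move=> H v vp; rewrite (negbTE (H v vp)). Qed.

Lemma spine_prefixT (Z : {set T}) : {subset p <= Z} -> spine_prefix Z (size p).
Proof. by move=> H v vp; rewrite H // sidx_lt. Qed.

Lemma cut2_nested_prefixes A B ma mb :
  spine_prefix A ma -> spine_prefix B mb -> ma <= mb ->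
  cut2 e A B \subset [set (l, attach l) | l in inner_leaves A :&: outer_leaves B].
Proof.
move=> pA pB le; apply/subsetP => -[u v]; rewrite !inE /=.
move=> /andP[/andP[/andP[uB uA] /andP[vA vB]] euv].
case: (caterpillar_edge_cases euv) => [[up _ _]|[unp vE]|[vnp uE]].
- by rewrite (spine_prefix_sub pA pB le up uA) in uB.
- apply/imsetP; exists u; last by rewrite vE.
  by rewrite !inE unp -vE vA vB uA uB.
- by rewrite uE in uA uB; rewrite (spine_prefix_sub pA pB le (attach_mem v) uA) in uB.
Qed.

Lemma cut2_crossing_prefixes A B ma mb :
  spine_prefix A ma -> spine_prefix B mb -> ma != mb ->
  cut2 e A (~: B) \subset [set (l, attach l) | l in inner_leaves A :&: inner_leaves B]
                     :|: [set (attach l, l) | l in outer_leaves A :&: outer_leaves B].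
Proof.
move=> pA pB ne; apply/subsetP => -[u v]; rewrite !inE /= !negbK.
move=> /andP[/andP[/andP[uB uA] /andP[vA vB]] euv].
case: (caterpillar_edge_cases euv) => [[up vp sv]|[unp vE]|[vnp uE]].
- move: uA uB vA vB sv ne; rewrite (pA u up) (pB u up) (pA v vp) (pB v vp) -!leqNgt.
  by move=> a b c d /orP[/eqP|/eqP]; lia.
- apply/orP; left; apply/imsetP; exists u; last by rewrite vE.
  by rewrite !inE unp -vE vA vB uA uB.
- apply/orP; right; apply/imsetP; exists v; last by rewrite uE.
  by rewrite !inE vnp -uE vA vB uA uB.
Qed.

Variable x0 : T.

(* a prefix cuts at most one spine edge; every other cut edge joins a leaf to its spine vertex *)
Lemma dcut_spine_prefix Z m : spine_prefix Z m ->
  dcut e Z <= ((0 < m) && (m < size p)) + #|outer_leaves Z| + #|inner_leaves Z|.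
Proof.
move=> pZ.
set A : {set T * T} :=
  if (0 < m) && (m < size p) then [set (nth x0 p m.-1, nth x0 p m)] else set0.
set B : {set T * T} := [set (l, attach l) | l in inner_leaves Z].
set C : {set T * T} := [set (attach l, l) | l in outer_leaves Z].
have sub : [set xy : T * T | (xy.1 \in Z) && (xy.2 \notin Z) && e xy.1 xy.2]
             \subset A :|: C :|: B.
  apply/subsetP => -[u v]; rewrite inE /= => /andP[/andP[uZ vZ] euv].
  case: (caterpillar_edge_cases euv) => [[up vp /orP[/eqP sv|/eqP su]]|[unp vE]|[vnp uE]].
  - have := pZ u up; have := pZ v vp; rewrite uZ (negbTE vZ) => /esym/negbT.
    rewrite -leqNgt => mv /esym um.
    have mE : m = (sidx u).+1 by apply/eqP; rewrite eqn_leq um -sv mv.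
    have sv0 : 0 < sidx v by rewrite sv.
    rewrite !inE; apply/orP; left; apply/orP; left.
    rewrite /A mE -sv sidx_lt sv0 /= inE.
    by rewrite sv /= -sv !sidx_spine // !nth_index.
  - have := pZ v vp; have := pZ u up; rewrite uZ (negbTE vZ) su => /esym um /esym.
    by rewrite ltnW.
  - rewrite !inE; apply/orP; right; apply/imsetP; exists u; last by rewrite vE.
    by rewrite vE in vZ; rewrite inE unp /= uZ vZ.
  - rewrite !inE; apply/orP; left; apply/orP; right; apply/imsetP; exists v; last by rewrite uE.
    by rewrite uE in uZ; rewrite inE vnp /= uZ vZ.
rewrite /dcut; apply: (leq_trans (subset_leq_card sub)).
have cardsU_le (X Y : {set T * T}) : #|X :|: Y| <= #|X| + #|Y|.
  by rewrite cardsU leq_subr.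
apply: leq_trans (cardsU_le _ _) _; apply: leq_add; last exact: leq_imset_card.
apply: leq_trans (cardsU_le _ _) _; apply: leq_add; last exact: leq_imset_card.
by rewrite /A; case: ifP => _; rewrite ?cards1 ?cards0.
Qed.

Lemma cut_leaf_exists Z m : 2 <= dcut e Z -> spine_prefix Z m ->
  exists l, (l \in outer_leaves Z) || (l \in inner_leaves Z).
Proof.
move=> dZ pZ; have := leq_trans dZ (dcut_spine_prefix pZ).
case: (set_0Vmem (outer_leaves Z)) => [->|[l lL]]; last by exists l; rewrite lL.
case: (set_0Vmem (inner_leaves Z)) => [->|[l lR]]; last by exists l; rewrite lR orbT.
by rewrite !cards0 !addn0; case: (_ && _).
Qed.

Lemma cut_leaves_not_single Z m x : 2 <= dcut e Z -> spine_prefix Z m ->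
  (m == 0) || (size p <= m) ->
  (forall l, l \in outer_leaves Z -> l = x) -> (forall l, l \in inner_leaves Z -> l = x) ->
  False.
Proof.
move=> dZ pZ mE outer_x inner_x; have := leq_trans dZ (dcut_spine_prefix pZ).
have -> : (0 < m) && (m < size p) = false.
  by case/orP: mE => [/eqP->//|le]; rewrite [m < _]ltnNge le andbF.
have cL : #|outer_leaves Z| <= 1 by apply/card_le1_eqP => a b /outer_x -> /outer_x ->.
have cR : #|inner_leaves Z| <= 1 by apply/card_le1_eqP => a b /inner_x -> /inner_x ->.
case: (set_0Vmem (outer_leaves Z)) => [->|[l lL]].
  by rewrite cards0 add0n; move: cR; case: #|_| => [|[]].
have -> : #|inner_leaves Z| = 0.
  apply: eq_card0 => z; apply/negP => zR.
  by move: (outer_inner_leaves lL); rewrite (outer_x l lL) -(inner_x z zR) zR.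
by rewrite addn0 add0n; move: cL; case: #|_| => [|[]].
Qed.

(* leaves are oriented one at a time, in increasing [vkey] order *)
Definition vkey v := sidx v * #|T| + enum_rank v.

Lemma vkey_lt u v : sidx u < sidx v -> vkey u < vkey v.
Proof.
move=> lt; rewrite /vkey.
have ha : (enum_rank u : nat) < #|T| by exact: ltn_ord.
have hb : (enum_rank v : nat) < #|T| by exact: ltn_ord.
have : (sidx u).+1 * #|T| <= sidx v * #|T| by rewrite leq_mul2r lt orbT.
by rewrite mulSn; lia.
Qed.

Lemma vkey_sidx_le u v : vkey u <= vkey v -> sidx u <= sidx v.
Proof. by move=> le; rewrite leqNgt; apply/negP => /vkey_lt; rewrite ltnNge le. Qed.

Lemma vkey_inj : injective vkey.
Proof.
move=> u v E.
have Ei : sidx u = sidx v by apply/eqP; rewrite eqn_leq !vkey_sidx_le // E.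
by move: E; rewrite /vkey Ei => /addnI /val_inj /enum_rank_inj.
Qed.

Lemma vkey_lt_neq n l x : vkey x = n -> vkey l <= n -> l != x -> vkey l < n.
Proof.
move=> kx le ne; rewrite ltn_neqAle le andbT; apply: contra ne => /eqP E.
by apply/eqP; apply: vkey_inj; rewrite E kx.
Qed.

Lemma vkey_bound l : vkey l < size p * #|T|.
Proof.
rewrite /vkey; have hr : (enum_rank l : nat) < #|T| by exact: ltn_ord.
have : (sidx l).+1 * #|T| <= size p * #|T| by rewrite leq_mul2r sidx_lt orbT.
by rewrite mulSn; lia.
Qed.

Variable Bs : {set {set T}}.
Hypotheses (Bs_bias : bias e Bs) (Bs_dcut : forall X, X \in Bs -> 2 <= dcut e X).
Local Notation biased := (biased Bs).
Local Notation biased_or_trivial := (biased_or_trivial Bs).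
Let dcut_biased Z : biased Z -> 2 <= dcut e Z := @biased_dcut _ _ _ e_sym Bs_dcut Z.

(* [O] is the set of leaves whose edge will be directed away from the spine *)
Definition leaves_exit (O Z : {set T}) :=
  {subset outer_leaves Z <= O} /\ (forall l, l \in inner_leaves Z -> l \notin O).

Definition sound n (O : {set T}) := forall Z m, biased Z -> spine_prefix Z m ->
  (forall l, (l \in outer_leaves Z) || (l \in inner_leaves Z) -> vkey l < n) ->
  ~ leaves_exit O Z.

(* [y] is the only cut leaf of [Z] that can still provide an edge entering [Z] *)
Definition forcing (O : {set T}) y Z m := [/\ biased Z, spine_prefix Z m, y \in inner_leaves Z,
  (forall l, (l \in outer_leaves Z) || (l \in inner_leaves Z) -> vkey l <= vkey y)
  & {subset outer_leaves Z <= O} /\ (forall l, l \in inner_leaves Z -> l \in O -> l = y)].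

Definition witnessed (O : {set T}) := forall y, y \in O -> exists Z m, forcing O y Z m.

Definition invariant n O := [/\ sound n O, witnessed O & forall y, y \in O -> vkey y < n].

Section Extension.
Variables (n : nat) (O : {set T}) (x : T).
Hypotheses (O_sound : sound n O) (x_leaf : x \notin p) (x_key : vkey x = n).

Section Base.
Variables (Z1 Z2 : {set T}) (m1 m2 : nat).
Hypotheses (x_fresh : x \notin O) (Z1_biased : biased Z1) (Z1_prefix : spine_prefix Z1 m1)
  (x_inner1 : x \in inner_leaves Z1)
  (Z1_keys : forall l, (l \in outer_leaves Z1) || (l \in inner_leaves Z1) -> vkey l <= n)
  (Z1_outer : {subset outer_leaves Z1 <= O})
  (Z1_inner : forall l, l \in inner_leaves Z1 -> l \in O -> l = x).
Hypotheses (Z2_biased : biased Z2) (Z2_prefix : spine_prefix Z2 m2)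
  (x_outer2 : x \in outer_leaves Z2) (Z2_outer : forall l, l \in outer_leaves Z2 -> l = x)
  (Z2_inner : forall l, l \notin inner_leaves Z2).

Let x_Z1 : x \in Z1. Proof. by move: x_inner1; rewrite inner_leavesE => /and3P[]. Qed.
Let hx_notZ1 : attach x \notin Z1.
Proof. by move: x_inner1; rewrite inner_leavesE => /and3P[]. Qed.
Let x_notZ2 : x \notin Z2. Proof. by move: x_outer2; rewrite outer_leavesE => /and3P[]. Qed.
Let hx_Z2 : attach x \in Z2. Proof. by move: x_outer2; rewrite outer_leavesE => /and3P[]. Qed.

Let m1_le : m1 <= sidx x.
Proof. by move: hx_notZ1; rewrite (spine_prefix_attach _ Z1_prefix) -leqNgt. Qed.
Let lt_m2 : sidx x < m2. Proof. by rewrite -(spine_prefix_attach _ Z2_prefix). Qed.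
Let m12 : m1 <= m2. Proof. exact: leq_trans m1_le (ltnW lt_m2). Qed.

Let attach12 l : attach l \in Z1 -> attach l \in Z2.
Proof. exact: spine_prefix_sub Z1_prefix Z2_prefix m12 (attach_mem l). Qed.

Let inner1_attach2 l : l \in inner_leaves Z1 -> attach l \in Z2.
Proof.
move=> lR; rewrite (spine_prefix_attach _ Z2_prefix); apply: leq_ltn_trans _ lt_m2.
by apply: vkey_sidx_le; rewrite x_key; apply: Z1_keys; rewrite lR orbT.
Qed.

Let Z1_inner_fresh l : l \in inner_leaves Z1 -> l \notin O.
Proof. by move=> lR; apply: contra x_fresh => lO; rewrite -(Z1_inner lR lO). Qed.

Let base_cut2 : dcut2 e Z1 Z2 = 1.
Proof.
rewrite dcut2E -(cards1 (x, attach x)).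
have -> // : cut2 e Z1 Z2 = [set (x, attach x)]; apply/eqP; rewrite eqEsubset; apply/andP; split.
  apply: subset_trans (cut2_nested_prefixes Z1_prefix Z2_prefix m12) _.
  by apply/subsetP => z /imsetP[l]; rewrite inE => /andP[_ /Z2_outer ->] ->; rewrite inE.
by rewrite sub1set !inE /= x_Z1 x_notZ2 hx_Z2 hx_notZ1 edge_attach.
Qed.

Let base_meet : ~ biased_or_trivial (Z1 :&: Z2).
Proof.
case/or3P => [iI|/eqP I0|/eqP IT].
- apply: (O_sound iI (spine_prefixI Z1_prefix Z2_prefix)).
    move=> l /orP[/outer_leavesI[lL|[_ hl /Z2_outer lx]]|/inner_leavesI[[lR lZ2]|[_ _ lR2]]].
    + apply: vkey_lt_neq x_key (Z1_keys _) _; first by rewrite lL.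
      by apply/negP => /eqP lx; move: lL; rewrite lx outer_leavesE x_Z1 /= !andbF.
    + by move: hx_notZ1; rewrite -lx hl.
    + apply: vkey_lt_neq x_key (Z1_keys _) _; first by rewrite lR orbT.
      by apply/negP => /eqP lx; move: lZ2; rewrite lx (negbTE x_notZ2).
    + by rewrite (negbTE (Z2_inner l)) in lR2.
  split.
    move=> l /outer_leavesI[/Z1_outer //|[_ hl /Z2_outer lx]].
    by move: hx_notZ1; rewrite -lx hl.
  by move=> l /inner_leavesI[[/Z1_inner_fresh //]|[_ _ lR2]]; rewrite (negbTE (Z2_inner l)) in lR2.
- apply: (@cut_leaves_not_single Z1 0 x (dcut_biased Z1_biased)) => //.
  + apply: spine_prefix0 => v vp; apply/negP => vZ1.
    have : v \in Z1 :&: Z2 by rewrite inE vZ1 (spine_prefix_sub Z1_prefix Z2_prefix m12).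
    by rewrite I0 inE.
  + move=> l; rewrite outer_leavesE => /and3P[_ hl _].
    have : attach l \in Z1 :&: Z2 by rewrite inE hl attach12.
    by rewrite I0 inE.
  + move=> l lR; apply: Z2_outer; rewrite outer_leavesE inner1_attach2 //.
    move: lR; rewrite inner_leavesE => /and3P[-> _ lZ1] /=.
    apply/negP => lZ2; have : l \in Z1 :&: Z2 by rewrite inE lZ1 lZ2.
    by rewrite I0 inE.
- have : x \in Z1 :&: Z2 by rewrite IT inE.
  by rewrite inE (negbTE x_notZ2) andbF.
Qed.

Let base_join : ~ biased_or_trivial (Z1 :|: Z2).
Proof.
case/or3P => [iU|/eqP U0|/eqP UT].
- have [l] := cut_leaf_exists (dcut_biased iU) (spine_prefixU Z1_prefix Z2_prefix).
  case/orP => [/outer_leavesU[[lL lZ2]|[/Z2_outer lx lZ1]]|/inner_leavesU[[lR nh]|[lR2 _]]].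
  + have := lL; rewrite outer_leavesE => /and3P[lp hl nl].
    have : l \in outer_leaves Z2 by rewrite outer_leavesE lp attach12 // lZ2.
    by move/Z2_outer => lx; rewrite lx x_Z1 in nl.
  + by rewrite lx x_Z1 in lZ1.
  + by rewrite inner1_attach2 in nh.
  + by rewrite (negbTE (Z2_inner l)) in lR2.
- have : attach x \in Z1 :|: Z2 by rewrite inE hx_Z2 orbT.
  by rewrite U0 inE.
- apply: (@cut_leaves_not_single Z2 (size p) x (dcut_biased Z2_biased)) => //.
  + apply: spine_prefixT => v vp; have : v \in Z1 :|: Z2 by rewrite UT inE.
    by rewrite inE => /orP[/(spine_prefix_sub Z1_prefix Z2_prefix m12 vp) ->|].
  + by rewrite leqnn orbT.
  + by move=> l; rewrite (negbTE (Z2_inner l)).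
Qed.

Let base_cut2C : dcut2 e Z1 (~: Z2) = 0.
Proof.
rewrite dcut2E; apply: eq_card0 => z; apply/negP.
move=> /(subsetP (cut2_crossing_prefixes Z1_prefix Z2_prefix _)).
rewrite neq_ltn (leq_ltn_trans m1_le lt_m2) => /(_ isT).
rewrite inE => /orP[/imsetP[l]|/imsetP[l]]; rewrite inE => /andP[].
  by rewrite (negbTE (Z2_inner l)).
by move=> lL /Z2_outer lx; move: lL; rewrite lx outer_leavesE x_Z1 /= !andbF.
Qed.

Let base_diff : ~ biased_or_trivial (Z1 :\: Z2).
Proof.
case/or3P => [iY|/eqP Y0|/eqP YT].
- apply: (@cut_leaves_not_single (Z1 :\: Z2) 0 x (dcut_biased iY)) => //.
  + apply: spine_prefix0 => v vp; rewrite inE; apply/negP => /andP[nv vZ1].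
    by rewrite (spine_prefix_sub Z1_prefix Z2_prefix m12) in nv.
  + move=> l; rewrite outer_leavesE !inE => /and3P[_ /andP[nh hZ1] _].
    by rewrite attach12 in nh.
  + move=> l; rewrite inner_leavesE !inE negb_and negbK => /and3P[lp hl /andP[nlZ2 lZ1]].
    apply: Z2_outer; rewrite outer_leavesE lp nlZ2 andbT /=.
    case: (boolP (attach l \in Z1)) => [/attach12 //|nh]; apply: inner1_attach2.
    by rewrite inner_leavesE lp nh lZ1.
- have : x \in Z1 :\: Z2 by rewrite inE x_Z1 x_notZ2.
  by rewrite Y0 inE.
- have : attach x \in Z1 :\: Z2 by rewrite YT inE.
  by rewrite inE hx_Z2.
Qed.

Lemma forced_single_outer_contra : False.
Proof.
case: (biased_orientation Z1_biased Z2_biased) => [same|mixed].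
  by case: (biased_uncross1 e_sym Bs_bias same base_cut2) => [/base_meet|/base_join].
exact: base_diff (biased_uncross0 e_sym Bs_bias mixed base_cut2C).
Qed.

End Base.
Section Descent.
Variables (Z2 Zy : {set T}) (m2 my : nat) (y : T).
Hypotheses (Z2_biased : biased Z2) (Z2_prefix : spine_prefix Z2 m2)
  (x_outer2 : x \in outer_leaves Z2)
  (Z2_keys : forall l, l \in outer_leaves Z2 -> vkey l <= n)
  (Z2_inner : forall l, l \notin inner_leaves Z2)
  (Z2_outer : forall l, l \in outer_leaves Z2 -> (l == x) || (l \in O)).
Hypotheses (y_outer2 : y \in outer_leaves Z2) (y_neq_x : y != x)
  (y_min : forall z, z \in outer_leaves Z2 -> z != x -> vkey y <= vkey z).
Hypotheses (Zy_biased : biased Zy) (Zy_prefix : spine_prefix Zy my)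
  (y_inner : y \in inner_leaves Zy)
  (Zy_keys : forall l, (l \in outer_leaves Zy) || (l \in inner_leaves Zy) -> vkey l <= vkey y)
  (Zy_outer : {subset outer_leaves Zy <= O})
  (Zy_inner : forall l, l \in inner_leaves Zy -> l \in O -> l = y).

Let y_leaf : y \notin p. Proof. by move: y_outer2; rewrite outer_leavesE => /and3P[]. Qed.
Let y_Zy : y \in Zy. Proof. by move: y_inner; rewrite inner_leavesE => /and3P[]. Qed.
Let hy_notZy : attach y \notin Zy.
Proof. by move: y_inner; rewrite inner_leavesE => /and3P[]. Qed.
Let y_notZ2 : y \notin Z2. Proof. by move: y_outer2; rewrite outer_leavesE => /and3P[]. Qed.
Let hy_Z2 : attach y \in Z2. Proof. by move: y_outer2; rewrite outer_leavesE => /and3P[]. Qed.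
Let x_notZ2 : x \notin Z2. Proof. by move: x_outer2; rewrite outer_leavesE => /and3P[]. Qed.
Let hx_Z2 : attach x \in Z2. Proof. by move: x_outer2; rewrite outer_leavesE => /and3P[]. Qed.

Let vkey_y_lt : vkey y < n. Proof. exact: vkey_lt_neq x_key (Z2_keys y_outer2) y_neq_x. Qed.

Let my_le : my <= sidx y.
Proof. by move: hy_notZy; rewrite (spine_prefix_attach _ Zy_prefix) -leqNgt. Qed.
Let lt_m2 : sidx y < m2. Proof. by rewrite -(spine_prefix_attach _ Z2_prefix). Qed.
Let my2 : my <= m2. Proof. exact: leq_trans my_le (ltnW lt_m2). Qed.

Let attachY2 l : attach l \in Zy -> attach l \in Z2.
Proof. exact: spine_prefix_sub Zy_prefix Z2_prefix my2 (attach_mem l). Qed.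

Let cutY_neq_x l : (l \in outer_leaves Zy) || (l \in inner_leaves Zy) -> l != x.
Proof.
move/Zy_keys => kl; apply/negP => /eqP lx.
by move: (leq_ltn_trans kl vkey_y_lt); rewrite lx x_key ltnn.
Qed.

Let x_notZy : x \notin Zy.
Proof.
apply/negP => xZ; have hx : attach x \notin Zy.
  rewrite (spine_prefix_attach _ Zy_prefix) -leqNgt; apply: leq_trans my_le _.
  by apply: vkey_sidx_le; rewrite x_key ltnW.
have xR : x \in inner_leaves Zy by rewrite inner_leavesE x_leaf hx xZ.
by have := @cutY_neq_x x; rewrite xR orbT eqxx => /(_ isT).
Qed.

Let innerY_attach2 l : l \in inner_leaves Zy -> attach l \in Z2.
Proof.
move=> lR; rewrite (spine_prefix_attach _ Z2_prefix); apply: leq_ltn_trans _ lt_m2.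
by apply: vkey_sidx_le; apply: Zy_keys; rewrite lR orbT.
Qed.

Let descent_cut2 : dcut2 e Zy Z2 = 1.
Proof.
rewrite dcut2E -(cards1 (y, attach y)).
have -> // : cut2 e Zy Z2 = [set (y, attach y)]; apply/eqP; rewrite eqEsubset; apply/andP; split.
  apply: subset_trans (cut2_nested_prefixes Zy_prefix Z2_prefix my2) _.
  apply/subsetP => z /imsetP[l]; rewrite inE => /andP[lR lL] ->.
  have : (l == x) || (l \in O) := Z2_outer lL.
  rewrite (negbTE (cutY_neq_x _)) ?lR ?orbT //= => lO.
  by rewrite (Zy_inner lR lO) inE.
by rewrite sub1set !inE /= y_Zy y_notZ2 hy_Z2 hy_notZy (edge_attach y_leaf).
Qed.

Let descent_meet : ~ biased_or_trivial (Zy :&: Z2).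
Proof.
case/or3P => [iI|/eqP I0|/eqP IT].
- apply: (O_sound iI (spine_prefixI Zy_prefix Z2_prefix)).
    move=> l /orP[/outer_leavesI[lL|[lZy _ lL2]]|/inner_leavesI[[lR lZ2]|[_ _ lR2]]].
    + by apply: leq_ltn_trans vkey_y_lt; apply: Zy_keys; rewrite lL.
    + apply: vkey_lt_neq x_key (Z2_keys lL2) _.
      by apply/negP => /eqP lx; move: x_notZy; rewrite -lx lZy.
    + by apply: leq_ltn_trans vkey_y_lt; apply: Zy_keys; rewrite lR orbT.
    + by rewrite (negbTE (Z2_inner l)) in lR2.
  split.
    move=> l /outer_leavesI[/Zy_outer //|[lZy _ lL2]].
    move: (Z2_outer lL2) => /orP[/eqP lx|//].
    by move: x_notZy; rewrite -lx lZy.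
  move=> l /inner_leavesI[[lR lZ2]|[_ _ lR2]]; last by rewrite (negbTE (Z2_inner l)) in lR2.
  by apply/negP => lO; move: lZ2; rewrite (Zy_inner lR lO) (negbTE y_notZ2).
- apply: (@cut_leaves_not_single Zy 0 y (dcut_biased Zy_biased)) => //.
  + apply: spine_prefix0 => v vp; apply/negP => vZ.
    have : v \in Zy :&: Z2 by rewrite inE vZ (spine_prefix_sub Zy_prefix Z2_prefix my2).
    by rewrite I0 inE.
  + move=> l; rewrite outer_leavesE => /and3P[_ hl _].
    have : attach l \in Zy :&: Z2 by rewrite inE hl attachY2.
    by rewrite I0 inE.
  + move=> l lR; have := lR; rewrite inner_leavesE => /and3P[lp hl lZ].
    have lZ2 : l \notin Z2.
      apply/negP => lZ2; have : l \in Zy :&: Z2 by rewrite inE lZ lZ2.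
      by rewrite I0 inE.
    have : l \in outer_leaves Z2 by rewrite outer_leavesE lp innerY_attach2.
    move/Z2_outer => /orP[/eqP lx|lO]; last exact: Zy_inner.
    by move: x_notZy; rewrite -lx lZ.
- have : y \in Zy :&: Z2 by rewrite IT inE.
  by rewrite inE (negbTE y_notZ2) andbF.
Qed.

Let descent_cut2C : dcut2 e Zy (~: Z2) = 0.
Proof.
rewrite dcut2E; apply: eq_card0 => z; apply/negP.
move=> /(subsetP (cut2_crossing_prefixes Zy_prefix Z2_prefix _)).
rewrite neq_ltn (leq_ltn_trans my_le lt_m2) => /(_ isT).
rewrite inE => /orP[/imsetP[l]|/imsetP[l]]; rewrite inE => /andP[].
  by move=> _; rewrite (negbTE (Z2_inner l)).
move=> lL lL2 _.
have lx : l != x by apply: cutY_neq_x; rewrite lL.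
have kl : vkey l = vkey y by apply/eqP; rewrite eqn_leq (y_min lL2 lx) Zy_keys // lL.
by move: lL; rewrite (vkey_inj kl) outer_leavesE y_Zy /= !andbF.
Qed.

(* the complement of [Zy :\: Z2] would be a sound-violating prefix *)
Let descent_diff : ~ biased_or_trivial (Zy :\: Z2).
Proof.
case/or3P => [iY|/eqP Y0|/eqP YT].
- have RY l : l \in inner_leaves (Zy :\: Z2) -> l \in outer_leaves Z2 /\ l != x.
    move=> lR; have := lR.
    rewrite inner_leavesE !inE negb_and negbK => /and3P[lp hl /andP[nlZ2 lZ]].
    split; last by apply/negP => /eqP lx; move: x_notZy; rewrite -lx lZ.
    rewrite lp nlZ2 andbT /=.
    case: (boolP (attach l \in Zy)) => [/attachY2 //|nh]; apply: innerY_attach2.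
    by rewrite inner_leavesE lp nh lZ.
  have LY l : l \notin outer_leaves (Zy :\: Z2).
    apply/negP => lL; have := lL.
    by rewrite outer_leavesE !inE => /and3P[_ /andP[nh hZ] _]; rewrite attachY2 in nh.
  apply: (O_sound (Z := ~: (Zy :\: Z2)) (m := size p)).
  + by rewrite biasedC.
  + apply: spine_prefixT => v vp; rewrite !inE negb_and negbK.
    case: (boolP (v \in Zy)) => [vZ|_]; last by rewrite orbT.
    by rewrite (spine_prefix_sub Zy_prefix Z2_prefix my2 vp vZ).
  + rewrite outer_leavesC inner_leavesC => l /orP[/RY[/Z2_keys kl lx]|].
      exact: vkey_lt_neq x_key kl lx.
    by rewrite (negbTE (LY l)).
  + rewrite /leaves_exit outer_leavesC inner_leavesC; split.
      by move=> l /RY[/Z2_outer /orP[/eqP ->|//]]; rewrite eqxx.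
    by move=> l; rewrite (negbTE (LY l)).
- have : y \in Zy :\: Z2 by rewrite inE y_Zy y_notZ2.
  by rewrite Y0 inE.
- have : attach y \in Zy :\: Z2 by rewrite YT inE.
  by rewrite inE hy_Z2.
Qed.

Let join_outer l : l \in outer_leaves (Zy :|: Z2) -> l \in outer_leaves Z2 :\ y.
Proof.
case/outer_leavesU => [[lL lZ2]|[lL2 lZy]].
  have := lL; rewrite !outer_leavesE => /and3P[lp hl nlZy].
  by rewrite !inE lp attachY2 // lZ2 /= andbT; apply: contraNneq nlZy => ->.
by rewrite in_setD1 lL2 andbT; apply: contraNneq lZy => ->.
Qed.

Lemma uncross_witness : [/\ biased (Zy :|: Z2), x \in outer_leaves (Zy :|: Z2),
  {subset outer_leaves (Zy :|: Z2) <= outer_leaves Z2 :\ y}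
  & forall l, l \notin inner_leaves (Zy :|: Z2)].
Proof.
split; [| |exact: join_outer|].
- case: (biased_orientation Zy_biased Z2_biased) => [same|mixed]; last first.
    by case: (descent_diff (biased_uncross0 e_sym Bs_bias mixed descent_cut2C)).
  case: (biased_uncross1 e_sym Bs_bias same descent_cut2) => [/descent_meet //|].
  case/or3P => [//|/eqP U0|/eqP UT].
  + have : attach x \in Zy :|: Z2 by rewrite inE hx_Z2 orbT.
    by rewrite U0 inE.
  + have : x \in Zy :|: Z2 by rewrite UT inE.
    by rewrite inE (negbTE x_notZy) (negbTE x_notZ2).
- by rewrite outer_leavesE x_leaf !inE hx_Z2 orbT (negbTE x_notZy) (negbTE x_notZ2).
- move=> l; apply/negP => /inner_leavesU[[lR nh]|[lR2 _]].
    by rewrite innerY_attach2 in nh.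
  by rewrite (negbTE (Z2_inner l)) in lR2.
Qed.

End Descent.

Hypotheses (O_witnessed : witnessed O) (O_keys : forall y, y \in O -> vkey y < n).

Let x_fresh : x \notin O. Proof. by apply/negP => /O_keys; rewrite x_key ltnn. Qed.

(* induction on the number of outer leaves of [Z2], removed one by one by [uncross_witness] *)
Lemma forced_outer_contra Z1 m1 Z2 m2 : forcing O x Z1 m1 ->
  biased Z2 -> spine_prefix Z2 m2 -> x \in outer_leaves Z2 ->
  (forall l, (l \in outer_leaves Z2) || (l \in inner_leaves Z2) -> vkey l <= n) ->
  (forall l, l \in outer_leaves Z2 -> (l == x) || (l \in O)) -> False.
Proof.
case=> Z1_biased Z1_prefix x_inner1; rewrite x_key => Z1_keys [Z1_outer Z1_inner].
elim: {Z2}#|outer_leaves Z2| {-2}Z2 m2 (leqnn #|outer_leaves Z2|) => [|c IH] Z2 m2 cZ.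
  by move=> _ _; move: cZ; rewrite leqn0 cards_eq0 => /eqP ->; rewrite inE.
move=> Z2_biased Z2_prefix xL2 k2 L2.
have xm2 : sidx x < m2.
  by move: xL2; rewrite outer_leavesE (spine_prefix_attach _ Z2_prefix) => /and3P[].
have R2 l : l \notin inner_leaves Z2.
  apply/negP => lR; have := lR.
  rewrite inner_leavesE (spine_prefix_attach _ Z2_prefix) -leqNgt => /and3P[_ ml _].
  have : vkey l <= vkey x by rewrite x_key; apply: k2; rewrite lR orbT.
  by move/vkey_sidx_le => le; move: (leq_ltn_trans le xm2); rewrite ltnNge ml.
have k2o l : l \in outer_leaves Z2 -> vkey l <= n by move=> lL; apply: k2; rewrite lL.
case: (boolP [exists y, (y \in outer_leaves Z2) && (y != x)]) => [/existsP[y0 Py0]|].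
  case: (@arg_minnP _ y0 [pred y | (y \in outer_leaves Z2) && (y != x)] vkey Py0).
  move=> y /andP[yL yx] ymin.
  have y_min z : z \in outer_leaves Z2 -> z != x -> vkey y <= vkey z.
    by move=> zL zx; apply: ymin; rewrite /= zL zx.
  have yO : y \in O by move: (L2 y yL); rewrite (negbTE yx).
  have [Zy [my [Zy_biased Zy_prefix yRy ky [Ly Ry]]]] := O_witnessed yO.
  have [iU xLU subU RU] := uncross_witness Z2_biased Z2_prefix xL2 k2o R2 L2 yL yx y_min
    Zy_biased Zy_prefix yRy ky Ly Ry.
  apply: (IH (Zy :|: Z2) (maxn my m2)) => //.
  - have /subset_leq_card sub : outer_leaves (Zy :|: Z2) \subset outer_leaves Z2 :\ y.
      exact/subsetP.
    apply: leq_trans sub _.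
    by move: cZ; rewrite (cardsD1 y (outer_leaves Z2)) yL add1n ltnS.
  - exact: spine_prefixU.
  - by move=> l; rewrite (negbTE (RU l)) orbF => /subU /setD1P[_ /k2o].
  - by move=> l /subU /setD1P[_ /L2].
rewrite negb_exists => /forallP single.
have Z2_outer l : l \in outer_leaves Z2 -> l = x.
  by move=> lL; apply/eqP; move: (single l); rewrite lL /= negbK.
exact: (forced_single_outer_contra x_fresh Z1_biased Z1_prefix x_inner1 Z1_keys Z1_outer Z1_inner
  Z2_biased Z2_prefix xL2 Z2_outer R2).
Qed.

Let keys_below_n Z :
  (forall l, (l \in outer_leaves Z) || (l \in inner_leaves Z) -> vkey l < n.+1) ->
  x \notin outer_leaves Z -> x \notin inner_leaves Z ->
  forall l, (l \in outer_leaves Z) || (l \in inner_leaves Z) -> vkey l < n.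
Proof.
move=> kZ xL xR l lW; apply: vkey_lt_neq x_key _ _; first by rewrite -ltnS kZ.
by apply/negP => /eqP lx; move: lW; rewrite lx (negbTE xL) (negbTE xR).
Qed.

Lemma invariant_forced Z1 m1 : forcing O x Z1 m1 -> invariant n.+1 (x |: O).
Proof.
move=> forced; split.
- move=> Z m iZ pZ kZ [bL bR].
  have [xL|xL] := boolP (x \in outer_leaves Z).
    apply: (forced_outer_contra forced iZ pZ xL) => [l /kZ|l /bL]; first by rewrite ltnS.
    by rewrite in_setU1.
  have [xR|xR] := boolP (x \in inner_leaves Z); first by move: (bR x xR); rewrite setU11.
  apply: (O_sound iZ pZ (keys_below_n kZ xL xR)); split.
    by move=> l lL; move: (bL l lL); rewrite in_setU1 => /orP[/eqP lx|//]; rewrite -lx lL in xL.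
  by move=> l /bR; rewrite in_setU1 negb_or => /andP[].
- move=> y; rewrite in_setU1 => /orP[/eqP ->|yO].
    case: forced => Z1_biased Z1_prefix x_inner1 Z1_keys [Z1_outer Z1_inner].
    exists Z1, m1; split => //; split => [l /Z1_outer|l lR]; first by rewrite in_setU1 orbC => ->.
    by rewrite in_setU1 => /orP[/eqP //|/(Z1_inner l lR)].
  have [Zy [my [iZy pZy yR ky [Ly Ry]]]] := O_witnessed yO.
  exists Zy, my; split => //; split => [l /Ly|l lR]; first by rewrite in_setU1 orbC => ->.
  rewrite in_setU1 => /orP[/eqP lx|]; last exact: Ry.
  have : vkey l <= vkey y by apply: ky; rewrite lR orbT.
  by rewrite lx x_key leqNgt O_keys.
- by move=> y; rewrite in_setU1 => /orP[/eqP ->|/O_keys /ltnW]; rewrite ?x_key.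
Qed.

Lemma invariant_unforced : ~ (exists Z1 m1, forcing O x Z1 m1) -> invariant n.+1 O.
Proof.
move=> unforced; split => // [Z m iZ pZ kZ [bL bR]|y /O_keys /ltnW //].
have [xL|xL] := boolP (x \in outer_leaves Z); first by move: (bL x xL); rewrite (negbTE x_fresh).
have [xR|xR] := boolP (x \in inner_leaves Z).
  apply: unforced; exists Z, m; split => //; first by move=> l /kZ; rewrite ltnS x_key.
  by split => // l /bR /negbTE ->.
exact: (O_sound iZ pZ (keys_below_n kZ xL xR)).
Qed.

End Extension.

Lemma invariant_exists n : exists O, invariant n O.
Proof.
elim: n => [|n [O [O_sound O_wit O_keys]]].
  exists set0; split => [Z m iZ pZ kZ _|y|y]; rewrite ?inE //.
  by have [l /kZ] := cut_leaf_exists (dcut_biased iZ) pZ.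
case: (pickP (fun x => (x \notin p) && (vkey x == n))) => [x /andP[x_leaf /eqP x_key]|none].
  case: (classic (exists Z1 m1, forcing O x Z1 m1)) => [[Z1 [m1 forced]]|unforced].
    by exists (x |: O); apply: (invariant_forced O_sound x_leaf x_key O_wit O_keys forced).
  by exists O; apply: (invariant_unforced O_sound x_key O_wit O_keys unforced).
exists O; split => // [Z m iZ pZ kZ|y /O_keys /ltnW //].
apply: (O_sound _ _ iZ pZ) => l lW.
have lp : l \notin p.
  by move: lW; rewrite outer_leavesE inner_leavesE => /orP[/and3P[]|/and3P[]].
by move: (kZ l lW) (none l); rewrite ltnS leq_eqVlt lp /= => /orP[->|].
Qed.

(* spine vertices sit at odd positions; a leaf sits just after its spine vertex if it lies in
   [O], just before otherwise *)
Definition spine_pos (O : {set T}) v :=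
  if v \in p then (sidx v).*2.+1 else if v \in O then (sidx v).*2.+2 else (sidx v).*2.

Definition orient (O : {set T}) : rel T := fun u v => e u v && (spine_pos O u < spine_pos O v).

Lemma spine_pos_edge O u v : e u v -> spine_pos O u != spine_pos O v.
Proof.
have pos_spine w : w \in p -> spine_pos O w = (sidx w).*2.+1 by rewrite /spine_pos => ->.
have pos_leaf w : w \notin p -> odd (spine_pos O w) = false.
  by rewrite /spine_pos => /negbTE ->; case: (w \in O); rewrite /= ?odd_double.
case/caterpillar_edge_cases => [[up vp /orP[/eqP E|/eqP E]]|[unp ->]|[vnp ->]].
- by rewrite !pos_spine // E -!addnn; apply/negP => /eqP; lia.
- by rewrite !pos_spine // E -!addnn; apply/negP => /eqP; lia.
- apply/negP => /eqP E; have := pos_leaf u unp.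
  by rewrite E pos_spine ?attach_mem //= odd_double.
- apply/negP => /eqP E; have := pos_leaf v vnp.
  by rewrite -E pos_spine ?attach_mem //= odd_double.
Qed.

Lemma orient_directing O : directing e (orient O).
Proof.
split => [u v /andP[] //|u v euv]; rewrite /orient euv e_sym euv /=.
by have := spine_pos_edge O euv; case: ltngtP.
Qed.

Lemma orient_sorted O : sorted (orient O) p.
Proof.
apply/(sortedP x0) => i lt; rewrite /orient.
move/(sortedP x0): spine_sorted => /(_ i lt) ->.
have mi : nth x0 p i \in p by apply/mem_nth/ltnW.
have mi1 : nth x0 p i.+1 \in p by apply: mem_nth.
rewrite /spine_pos mi mi1 !sidx_spine // !index_uniq ?spine_uniq //; last exact: ltnW.
by rewrite -!addnn; lia.
Qed.

Lemma orient_enters O Z : ~ leaves_exit O Z ->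
  exists u v, [/\ u \notin Z, v \in Z & orient O u v].
Proof.
move=> not_exit.
case: (classic (exists2 l, l \in outer_leaves Z & l \notin O)) => [[l lL lO]|nL].
  have := lL; rewrite outer_leavesE => /and3P[lp hl nl].
  exists l, (attach l); split => //; rewrite /orient edge_attach //= /spine_pos attach_mem.
  by rewrite (negbTE lp) (negbTE lO) sidx_attach.
case: (classic (exists2 l, l \in inner_leaves Z & l \in O)) => [[l lR lO]|nR].
  have := lR; rewrite inner_leavesE => /and3P[lp hl lZ].
  exists (attach l), l; split => //; rewrite /orient e_sym edge_attach //= /spine_pos attach_mem.
  by rewrite (negbTE lp) lO sidx_attach.
case: not_exit; split => l.
  by move=> lL; apply/negPn/negP => lO; apply: nL; exists l.
by move=> lR; apply/negP => lO; apply: nR; exists l.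
Qed.

Lemma spine_prefix_find (X : {set T}) :
  (forall i, i.+1 < size p -> nth x0 p i \notin X -> nth x0 p i.+1 \notin X) ->
  spine_prefix X (find (fun v => v \notin X) p).
Proof.
move=> closed v vp; rewrite sidx_spine //.
set m := find _ p; set i := index v p.
have iv : nth x0 p i = v by rewrite nth_index.
case: (ltnP i m) => [lt|le]; first by rewrite -iv; move: (before_find x0 lt) => /negbFE ->.
have ip : i < size p by rewrite index_mem.
have hasX : has (fun v => v \notin X) p by rewrite has_find; apply: leq_ltn_trans le ip.
have nm : nth x0 p m \notin X := nth_find x0 hasX.
rewrite -iv; apply/negbTE.
have : forall j, j <= i - m -> nth x0 p (m + j) \notin X.
  elim=> [|j IH] lej; first by rewrite addn0.
  rewrite addnS; apply: closed; first by move: lej ip; lia.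
  by apply: IH; apply: ltnW.
by move/(_ (i - m) (leqnn _)); rewrite subnKC.
Qed.

Lemma orient_enters_biased O X : sound (size p * #|T|) O -> biased X ->
  exists u v, [/\ u \notin X, v \in X & orient O u v].
Proof.
move=> O_sound iX.
case: (classic (exists i, [/\ i.+1 < size p, nth x0 p i \notin X & nth x0 p i.+1 \in X])).
  move=> [i [lt iX' iX1]]; exists (nth x0 p i), (nth x0 p i.+1); split => //.
  by move/(sortedP x0): (orient_sorted O); apply.
move=> no_step; apply/orient_enters/(O_sound _ _ iX _) => [|l _]; last exact: vkey_bound.
apply: spine_prefix_find => i lt niX; apply/negP => i1X.
by apply: no_step; exists i.
Qed.

Lemma caterpillar_directing : exists d, [/\ directing e d,
  forall X, X \in Bs -> out_nonempty d X /\ in_nonempty d X & sorted d p].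
Proof.
have [O [O_sound _ _]] := invariant_exists (size p * #|T|).
exists (orient O); split; [exact: orient_directing | | exact: orient_sorted].
move=> X XB; split.
- have [|u [v [uX vX uv]]] := orient_enters_biased O_sound (X := ~: X).
    by rewrite biasedC /biased XB.
  by exists u, v; rewrite !inE negbK in uX vX.
- have [|u [v [uX vX uv]]] := orient_enters_biased O_sound (X := X); first by rewrite /biased XB.
  by exists u, v; rewrite !inE negbK.
Qed.

End Caterpillar.

Theorem mainTheorem4 (T : finType) (e : rel T) :
  simple_graph e -> caterpillar e ->
  upright e /\
  (forall p : seq T, spine e p ->
   forall Bs : {set {set T}}, bias e Bs ->
   (forall X, X \in Bs -> 2 <= dcut e X) ->
   exists d : rel T,
     [/\ directing e d,
         (forall X, X \in Bs -> out_nonempty d X /\ in_nonempty d X)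
       & sorted d p \/ sorted d (rev p)]).
Proof.
move=> [e_sym e_irr] [[e_forest _] [p0 p0_spine]].
have spine_directing p : spine e p -> forall Bs, bias e Bs ->
    (forall X, X \in Bs -> 2 <= dcut e X) ->
    exists d, [/\ directing e d,
      forall X, X \in Bs -> out_nonempty d X /\ in_nonempty d X & sorted d p].
  case: p => [[[]] //|x0 p] p_spine Bs Bs_bias Bs_dcut.
  exact: (caterpillar_directing e_sym e_irr e_forest p_spine x0 Bs_bias Bs_dcut).
split.
  split=> // Bs Bs_bias Bs_dcut.
  by have [d [dir_d cut_d _]] := spine_directing p0 p0_spine Bs Bs_bias Bs_dcut; exists d.
move=> p p_spine Bs Bs_bias Bs_dcut.
have [d [dir_d cut_d sorted_d]] := spine_directing p p_spine Bs Bs_bias Bs_dcut.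
by exists d; split => //; left.
Qed.
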